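(* Consider one execution of the Modified NCB algorithm with inputs $k$ and $W$, where $\sqrt T\le W\le T$, and assume $968kS\le T$. Let $i^*$ be an arm with $\mu_{i^*}=\mu^*$. On the event $E$, at every round $t$ of Phase 2, $\overline{\mathrm{NCB}}_{i^*,t}\ge\mu^*$, where $\overline{\mathrm{NCB}}_{i^*,t}$ denotes the value of $\overline{\mathrm{NCB}}_{i^*}$ at round $t$.
   Context: Bandit setup: $k$ arms, arm $i$ a distribution on $[0,1]$ with mean $\mu_i$, $\mu^*:=\max_i\mu_i>0$. $\log$ is the natural logarithm; $c:=3$; $T$ is the overall horizon and $S:=\frac{c^2\log T}{\mu^*}$. Modified NCB algorithm (inputs $k$, window $W$): maintain counts $n_i$ and empirical means $\widehat\mu_i$ (both initially $0$), round index $t=1$. Phase 1: while $\max_i n_i\widehat\mu_i\le 420c^2\log W$ and $t\le W$, pull a uniformly random arm, update, increment $t$. Phase 2: while $t\le W$, pull an arm maximizing $\overline{\mathrm{NCB}}_i:=\widehat\mu_i+2c\sqrt{2\widehat\mu_i\log W/n_i}$ (ties arbitrary), update, increment $t$. Canonical model: a $k\times T$ table $(Y_{i,s})$ of independent entries with $Y_{i,s}$ distributed as arm $i$, the $s$-th pull of arm $i$ yielding $Y_{i,s}$; $\widehat\mu_{i,s}:=\frac1s\sum_{r=1}^sY_{i,r}$. The uniform choices in Phase 1 are $U_1,U_2,\dots$, independent uniform in $[k]$ (independent of the table). Events: $E_1$: for every integer $r$ with $128kS\le r\le T$ and every arm $i$, the number of $r'\le r$ with $U_{r'}=i$ is at least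 $\frac{r}{2k}$ and at most $\frac{3r}{2k}$. $E_2$: for every arm $i$ with $\mu_i>\frac{\mu^*}{64}$ and every integer $s$ with $64S\le s\le T$, $|\mu_i-\widehat\mu_{i,s}|\le c\sqrt{\frac{\mu_i\log T}{s}}$. $E_3$: for every arm $j$ with $\mu_j\le\frac{\mu^*}{64}$ and every integer $s$ with $64S\le s\le T$, $\widehat\mu_{j,s}<\frac{\mu^*}{32}$. $E:=E_1\cap E_2\cap E_3$. *)

From HB Require Import structures.
From mathcomp Require Import all_boot all_order all_algebra.
From mathcomp Require Import reals exp.
Set Implicit Arguments. Unset Strict Implicit. Unset Printing Implicit Defensive.
Import Order.TTheory GRing.Theory Num.Theory.
Local Open Scope ring_scope.

Section Bandit.
Variables (R : realType) (k : nat).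

Definition cst : R := 3.

(* mu^* = max_i mu_i  (means are nonnegative, so the seed 0 is harmless) *)
Definition mustar (mu : 'I_k -> R) : R := \big[Num.max/0]_(i < k) mu i.

Definition Sval (mu : 'I_k -> R) (T : nat) : R := cst ^+ 2 * ln (T%:R) / mustar mu.

(* canonical model: Y i s is the s-th pull (s >= 1) of arm i;
   empirical mean of the first s pulls (0 when s = 0, as in the algorithm) *)
Definition muhat (Y : 'I_k -> nat -> R) (i : 'I_k) (s : nat) : R :=
  (\sum_(1 <= r < s.+1) Y i r) / s%:R.

Definition ucount (U : nat -> 'I_k) (i : 'I_k) (r : nat) : nat :=
  \sum_(1 <= r' < r.+1) (U r' == i : nat).

Definition E1 (U : nat -> 'I_k) (mu : 'I_k -> R) (T : nat) : Prop :=
  forall (r : nat) (i : 'I_k), 128 * k%:R * Sval mu T <= r%:R -> (r <= T)%N ->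
    (r%:R / (2 * k%:R) : R) <= (ucount U i r)%:R /\
    ((ucount U i r)%:R : R) <= 3 * r%:R / (2 * k%:R).

Definition E2 (Y : 'I_k -> nat -> R) (mu : 'I_k -> R) (T : nat) : Prop :=
  forall (i : 'I_k) (s : nat), mustar mu / 64 < mu i ->
    64 * Sval mu T <= s%:R -> (s <= T)%N ->
    `|mu i - muhat Y i s| <= cst * Num.sqrt (mu i * ln (T%:R) / s%:R).

Definition E3 (Y : 'I_k -> nat -> R) (mu : 'I_k -> R) (T : nat) : Prop :=
  forall (j : 'I_k) (s : nat), mu j <= mustar mu / 64 ->
    64 * Sval mu T <= s%:R -> (s <= T)%N ->
    muhat Y j s < mustar mu / 32.

Definition eventE Y U mu T : Prop := E1 U mu T /\ E2 Y mu T /\ E3 Y mu T.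

(* An execution is described by the arm A t pulled at each round t >= 1.
   n_i at (the start of) round t = number of pulls of i in rounds 1..t-1. *)
Definition npulls (A : nat -> 'I_k) (i : 'I_k) (t : nat) : nat :=
  \sum_(1 <= s < t) (A s == i : nat).

Definition muhat_t Y A i t : R := muhat Y i (npulls A i t).

Definition phase1_cond Y A (W t : nat) : Prop :=
  forall i : 'I_k,
    (npulls A i t)%:R * muhat_t Y A i t <= 420 * cst ^+ 2 * ln (W%:R).

Definition in_phase1 Y A (W t : nat) : Prop :=
  [/\ (1 <= t)%N, (t <= W)%N & forall t', (1 <= t')%N -> (t' <= t)%N -> phase1_cond Y A W t'].

Definition in_phase2 Y A (W t : nat) : Prop :=
  [/\ (1 <= t)%N, (t <= W)%N &
      exists2 t', ((1 <= t') && (t' <= t))%N & ~ phase1_cond Y A W t'].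

Definition NCBbar Y A (W : nat) (i : 'I_k) (t : nat) : R :=
  muhat_t Y A i t +
  2 * cst * Num.sqrt (2 * muhat_t Y A i t * ln (W%:R) / (npulls A i t)%:R).

(* A is an execution of Modified NCB(k, W) on table Y with Phase-1 uniform
   choices U (U r is the r-th uniform choice, used at round r of Phase 1),
   ties in Phase 2 broken arbitrarily. *)
Definition ncb_run Y (U : nat -> 'I_k) (A : nat -> 'I_k) (W : nat) : Prop :=
  forall t : nat,
    (in_phase1 Y A W t -> A t = U t) /\
    (in_phase2 Y A W t -> forall j : 'I_k, NCBbar Y A W j t <= NCBbar Y A W (A t) t).

End Bandit.

From HB Require Import structures.
From mathcomp Require Import all_boot all_order all_algebra.
From mathcomp Require Import reals exp.
From mathcomp Require Import lra.
Import Order.TTheory GRing.Theory Num.Theory.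
Local Open Scope ring_scope.

(* Phase 1 ends only once some arm has collected reward above
   [420 c^2 log W >= 1890 log T]. By E1 the first [128 k S] uniform draws choose any
   arm at most [192 S + 3/2] times, and E2, E3 cap the reward of so few pulls below
   that threshold. Hence Phase 1 lasts at least [128 k S] rounds and, by E1 again,
   every arm has been pulled at least [64 S] times during Phase 2. With that many
   samples E2 puts the empirical mean of [i*] within [mu*/8] of [mu*], and the NCB
   bonus then exceeds the remaining deviation. *)

Section RealFacts.
Set Implicit Arguments. Unset Strict Implicit.
Variable R : realType.

Lemma ln_ge1BV (x : R) : 0 < x -> 1 - x^-1 <= ln x.
Proof.
move=> x_gt0; have := expR_ge1Dx (- ln x).
rewrite expRN lnK ?posrE //; lra.
Qed.

Lemma ln_ge_half (x : R) : 2 <= x -> 1 / 2 <= ln x.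
Proof.
move=> x_ge2; have x_gt0 : 0 < x by lra.
have : x^-1 <= 2^-1 by rewrite lef_pV2 ?posrE.
have := ln_ge1BV x_gt0; lra.
Qed.

Lemma ln_nat_gt0 (n : nat) : 0 < ln (n%:R : R) -> (2 <= n)%N.
Proof.
rewrite ltNge; apply: contraNT; rewrite -ltnNge ltnS => n_le1.
by apply: ln_le0; rewrite lern1.
Qed.

Lemma ln_le_twice_ln (x y : R) : 0 < x -> Num.sqrt x <= y -> ln x <= 2 * ln y.
Proof.
move=> x_gt0 sqrtx_le_y.
have sqrtx_gt0 : 0 < Num.sqrt x by rewrite sqrtr_gt0.
have y_gt0 : 0 < y by exact: lt_le_trans sqrtx_le_y.
have : x <= y ^+ 2.
  by rewrite -(sqr_sqrtr (ltW x_gt0)) ler_pXn2r // ?nnegrE ltW.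
by rewrite -ler_ln ?posrE ?exprn_gt0 // lnXn // mulr2n mulr_natl.
Qed.

Lemma mulr_sqrt_div (n x : R) : 0 <= n -> n * Num.sqrt (x / n) = Num.sqrt (n * x).
Proof.
move=> n_ge0; have [->|n_neq0] := eqVneq n 0; first by rewrite !mul0r sqrtr0.
have -> : n * x = n ^+ 2 * (x / n) by rewrite expr2 -mulrA [n * (x / n)]mulrCA mulfV ?mulr1.
by rewrite [RHS]sqrtrM ?sqr_ge0 // sqrtr_sqr ger0_norm.
Qed.

Lemma addr_sqrt_le (a L : R) : 0 <= a -> a <= 1728 * L + 3 / 2 -> 1 / 2 <= L ->
  a + 3 * Num.sqrt (a * L) <= 1890 * L.
Proof.
move=> a_ge0 a_le L_ge.
(* [a L <= 1731 L^2 <= (42 L)^2] *)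
have : Num.sqrt (a * L) <= 42 * L.
  rewrite -[42 * L]ger0_norm -?sqrtr_sqr; last lra.
  by apply: ler_wsqrtr; nra.
lra.
Qed.

Lemma mean_le_ncb (m h L lW n : R) : 0 < m -> 0 < n -> 0 <= L -> L <= 2 * lW ->
  576 * L <= m * n -> `|m - h| <= 3 * Num.sqrt (m * L / n) ->
  m <= h + 2 * 3 * Num.sqrt (2 * h * lW / n).
Proof.
move=> m_gt0 n_gt0 L_ge0 L_le mn_ge; rewrite ler_norml.
set d := Num.sqrt _; set e := Num.sqrt _ => /andP[_ h_ge].
have n_inv_gt0 : 0 < n^-1 by rewrite invr_gt0.
(* [d <= m/24] forces [h >= 7m/8], so that [d^2 = m L / n <= 8 h lW / n = (2 e)^2]. *)
have d_le : d <= m / 24.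
  rewrite /d -[m / 24]ger0_norm -?sqrtr_sqr; last lra.
  apply: ler_wsqrtr; rewrite ler_pdivrMr //; nra.
have d_ge0 : 0 <= d := sqrtr_ge0 _.
have e_ge0 : 0 <= e := sqrtr_ge0 _.
have : d ^+ 2 <= (2 * e) ^+ 2.
  rewrite exprMn !sqr_sqrtr ?mulr_ge0 ?(ltW n_inv_gt0) //; try lra.
  rewrite !mulrA ler_pM2r //; nra.
rewrite ler_pXn2r ?nnegrE //; last lra.
lra.
Qed.

End RealFacts.

Lemma leq_sum_nat_ub (f : nat -> nat) a m n : (m <= n)%N ->
  (\sum_(a <= r < m) f r <= \sum_(a <= r < n) f r)%N.
Proof.
move=> m_le_n; have [a_le_m|m_lt_a] := leqP a m; last by rewrite big_geq // ltnW.
by rewrite [X in (_ <= X)%N](big_cat_nat a_le_m m_le_n) leq_addr.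
Qed.

Lemma sum_indicator_le (b : nat -> bool) a n : (\sum_(a <= r < n) (b r : nat) <= n - a)%N.
Proof.
apply: (@leq_trans (\sum_(a <= r < n) 1)); first by apply: leq_sum => r _; rewrite leq_b1.
by rewrite sum_nat_const_nat muln1.
Qed.

Section Counts.
Set Implicit Arguments. Unset Strict Implicit.
Variables (k : nat) (U A : nat -> 'I_k) (i : 'I_k).

Lemma ucount_mono m n : (m <= n)%N -> (ucount U i m <= ucount U i n)%N.
Proof. by move=> m_le_n; apply: leq_sum_nat_ub. Qed.

Lemma ucount_le r : (ucount U i r <= r)%N.
Proof. by rewrite (leq_trans (sum_indicator_le _ _ _)) ?subn1. Qed.

Lemma npulls_mono m n : (m <= n)%N -> (npulls A i m <= npulls A i n)%N.
Proof. exact: leq_sum_nat_ub. Qed.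

Lemma npulls_le t : (npulls A i t <= t.-1)%N.
Proof. by rewrite (leq_trans (sum_indicator_le _ _ _)) ?subn1. Qed.

End Counts.

Section Means.
Set Implicit Arguments. Unset Strict Implicit.
Variables (R : realType) (k : nat).

Lemma le_mustar (mu : 'I_k -> R) i : mu i <= mustar mu.
Proof. exact: le_bigmax. Qed.

Lemma mulr_muhat (Y : 'I_k -> nat -> R) i s :
  s%:R * muhat Y i s = \sum_(1 <= r < s.+1) Y i r.
Proof.
rewrite /muhat; case: s => [|s]; first by rewrite big_geq // mul0r.
by rewrite mulrC divfK // pnatr_eq0.
Qed.

Lemma mulr_muhat_mono (Y : 'I_k -> nat -> R) i m n : (forall s, 0 <= Y i s) ->
  (m <= n)%N -> m%:R * muhat Y i m <= n%:R * muhat Y i n.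
Proof.
move=> Y_ge0 m_le_n; rewrite !mulr_muhat.
rewrite [X in _ <= X](@big_cat_nat _ _ _ m.+1) //= lerDl.
exact: sumr_ge0.
Qed.

End Means.

Section Phases.
Set Implicit Arguments. Unset Strict Implicit.
Variables (R : realType) (k : nat) (Y : 'I_k -> nat -> R) (U A : nat -> 'I_k) (W : nat).

Lemma in_phase2_first_exit t : in_phase2 Y A W t ->
  exists2 t0, (1 <= t0 <= t)%N &
    ~ phase1_cond Y A W t0 /\ forall t', (1 <= t' < t0)%N -> phase1_cond Y A W t'.
Proof.
case=> _ _ [t' /andP[t'_ge1 t'_le_t] exit'].
pose cond n := [forall i, (npulls A i n)%:R * muhat_t Y A i n
                          <= 420 * cst R ^+ 2 * ln (W%:R : R)].
have condP n : reflect (phase1_cond Y A W n) (cond n) by exact: forallP.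
have exit_ex : exists n, (1 <= n)%N && ~~ cond n.
  by exists t'; rewrite t'_ge1; apply/condP.
case: (ex_minnP exit_ex) => t0 /andP[t0_ge1 /condP exit0] t0_min.
exists t0; first by rewrite t0_ge1 (leq_trans _ t'_le_t) // t0_min // t'_ge1; apply/condP.
split=> // t'' /andP[t''_ge1 t''_lt]; apply/condP.
by apply: contraTT t''_lt => ncond; rewrite -leqNgt t0_min // t''_ge1.
Qed.

Lemma npulls_eq_ucount t0 i : ncb_run Y U A W -> (t0 <= W)%N ->
  (forall t', (1 <= t' < t0)%N -> phase1_cond Y A W t') ->
  npulls A i t0 = ucount U i t0.-1.
Proof.
move=> run t0_le_W before; rewrite /npulls /ucount.
case: t0 t0_le_W before => [|t0] t0_le_W before; first by rewrite !big_geq.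
apply: eq_big_nat => s /andP[s_ge1 s_lt]; rewrite (proj1 (run s)) //.
split=> // [|t' t'_ge1 t'_le]; first exact: leq_trans (ltnW s_lt) t0_le_W.
by apply: before; rewrite t'_ge1 (leq_ltn_trans t'_le).
Qed.

End Phases.

Section Analysis.
Set Implicit Arguments. Unset Strict Implicit.
Variables (R : realType) (k : nat) (mu : 'I_k -> R) (Y : 'I_k -> nat -> R)
  (U A : nat -> 'I_k) (T W : nat) (istar : 'I_k).
Hypothesis mustar_gt0 : 0 < mustar mu.
Hypothesis mu_le1 : forall i, mu i <= 1.
Hypothesis Y_ge0 : forall i s, 0 <= Y i s.
Hypothesis mu_istar : mu istar = mustar mu.
Hypotheses (E1U : E1 U mu T) (E2Y : E2 Y mu T) (E3Y : E3 Y mu T).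
Hypothesis T_ge : 968 * k%:R * Sval mu T <= T%:R.
Hypotheses (sqrtT_le_W : Num.sqrt (T%:R : R) <= W%:R) (W_le_T : (W <= T)%N).
Hypothesis run : ncb_run Y U A W.

Local Notation ms := (mustar mu).
Local Notation S := (Sval mu T).
Local Notation L := (ln (T%:R : R)).

Lemma Sval_mustar : S * ms = 9 * L.
Proof. by rewrite /Sval /cst divfK ?gt_eqF // expr2; lra. Qed.

(* If [log T <= 0] then [S <= 0], so E2 applies to [s = 0], where the empirical mean
   and the confidence radius are both [0]; this contradicts [mu istar > 0]. *)
Lemma lnT_gt0 : 0 < L.
Proof.
rewrite ltNge; apply/negP => L_le0.
have S_le0 : S <= 0 by rewrite -(pmulr_lle0 _ mustar_gt0) Sval_mustar; lra.
have mu_large : ms / 64 < mu istar by rewrite mu_istar; have := mustar_gt0; lra.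
have S64_le0 : 64 * S <= 0%:R by lra.
have := E2Y mu_large S64_le0 (leq0n T).
by rewrite /muhat !invr0 !mulr0 sqrtr0 mulr0 subr0 normr_le0 gt_eqF // mu_istar.
Qed.

Lemma T_ge2 : (2 <= T)%N.
Proof. exact: ln_nat_gt0 lnT_gt0. Qed.

Lemma lnT_ge_half : 1 / 2 <= L.
Proof. by apply: ln_ge_half; rewrite (ler_nat R 2 T) T_ge2. Qed.

Lemma lnT_le_twice_lnW : L <= 2 * ln (W%:R : R).
Proof.
apply: ln_le_twice_ln sqrtT_le_W.
by rewrite ltr0n (ltn_trans _ T_ge2).
Qed.

Lemma Sval_gt0 : 0 < S.
Proof. by rewrite -(pmulr_lgt0 _ mustar_gt0) Sval_mustar; have := lnT_gt0; lra. Qed.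

Lemma mulr_muhat_le i s : 64 * S <= s%:R -> (s <= T)%N ->
  s%:R <= 192 * S + 3 / 2 -> s%:R * muhat Y i s <= 1890 * L.
Proof.
move=> s_ge s_le_T s_le; have L_ge := lnT_ge_half.
have s_gt0 : 0 < s%:R :> R by have := Sval_gt0; lra.
have sms_le : s%:R * ms <= 1728 * L + 3 / 2.
  have : s%:R * ms <= (192 * S + 3 / 2) * ms by rewrite ler_pM2r.
  have := mu_le1 istar; rewrite mu_istar mulrDl -mulrA Sval_mustar; lra.
have [mu_small|mu_large] := leP (mu i) (ms / 64).
  have : s%:R * muhat Y i s <= s%:R * (ms / 32) by rewrite ler_pM2l // ltW // (E3Y mu_small).
  lra.
have : s%:R * mu i <= s%:R * ms by rewrite ler_pM2l // le_mustar.
have := E2Y mu_large s_ge s_le_T; rewrite /cst ler_norml => /andP[muhat_le _] smu_le.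
have : s%:R * muhat Y i s <= s%:R * mu i + 3 * Num.sqrt (s%:R * mu i * L).
  by rewrite -mulrA -mulr_sqrt_div ?ler0n // [3 * _]mulrCA -mulrDr ler_pM2l //; lra.
have mu_ge0 : 0 <= mu i by apply: le_trans (ltW mu_large); rewrite divr_ge0 // ltW.
have a_le : s%:R * mu i <= 1728 * L + 3 / 2 by lra.
have := addr_sqrt_le (mulr_ge0 (ler0n R s) mu_ge0) a_le L_ge; lra.
Qed.

(* Compare with the first round [r0 > 128 k S]: by E1 the arm was chosen between
   [64 S] and [192 S + 3/2] times by the uniform choices up to [r0]. *)
Lemma ucount_muhat_le i r : r%:R < 128 * k%:R * S ->
  (ucount U i r)%:R * muhat Y i (ucount U i r) <= 1890 * L.
Proof.
move=> r_lt; have S_gt0 := Sval_gt0; have := T_ge2; rewrite -(ler_nat R) => T2.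
have k_ge1 : 1 <= k%:R :> R by rewrite ler1n (leq_ltn_trans (leq0n _) (ltn_ord i)).
have k_gt0 : 0 < k%:R :> R by lra.
have kS_gt0 : 0 < k%:R * S by rewrite mulr_gt0.
set r0 := (Num.truncn (128 * k%:R * S)).+1.
have r0_gt : 128 * k%:R * S < r0%:R := truncnS_gt _.
have r0_le : r0%:R <= 128 * k%:R * S + 1.
  by rewrite /r0 -natr1 lerD2r truncn_le -mulrA mulr_ge0 // ltW.
have r0_le_T : (r0 <= T)%N by rewrite -(ler_nat R); have := T_ge; lra.
have r_le_r0 : (r <= r0)%N by rewrite ltnW // -(ltr_nat R); lra.
have [m_ge m_le] := E1U i (ltW r0_gt) r0_le_T.
set m := ucount U i r0 in m_ge m_le.
have two_k_gt0 : 0 < 2 * k%:R :> R by lra.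
rewrite ler_pdivrMr // in m_ge; rewrite ler_pdivlMr // in m_le.
have m_ge64 : 64 * S <= m%:R by rewrite -(ler_pM2l k_gt0); lra.
have m_le192 : m%:R <= 192 * S + 3 / 2 by rewrite -(ler_pM2l k_gt0); lra.
have m_le_T : (m <= T)%N := leq_trans (ucount_le U i r0) r0_le_T.
apply: le_trans (mulr_muhat_mono (Y_ge0 i) (ucount_mono U i r_le_r0)) _.
exact: mulr_muhat_le.
Qed.

Lemma ucount_ge i r : 128 * k%:R * S <= r%:R -> (r <= T)%N -> 64 * S <= (ucount U i r)%:R.
Proof.
move=> r_ge r_le_T; have [u_ge _] := E1U i r_ge r_le_T.
have k_gt0 : 0 < k%:R :> R by rewrite ltr0n (leq_ltn_trans (leq0n _) (ltn_ord i)).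
rewrite ler_pdivrMr ?mulr_gt0 // in u_ge.
by rewrite -(ler_pM2l k_gt0); lra.
Qed.

Lemma npulls_phase2_ge i t : in_phase2 Y A W t -> 64 * S <= (npulls A i t)%:R.
Proof.
move=> ph2; have [_ t_le_W _] := ph2.
have [t0 /andP[t0_ge1 t0_le_t] [exit0 before_t0]] := in_phase2_first_exit ph2.
have t0_le_W := leq_trans t0_le_t t_le_W.
have pulls_t0 j := npulls_eq_ucount j run t0_le_W before_t0.
have r_le_T : (t0.-1 <= T)%N by rewrite (leq_trans (leq_pred _)) // (leq_trans t0_le_W).
have late : 128 * k%:R * S <= t0.-1%:R.
  rewrite leNgt; apply/negP => early; apply: exit0 => j.
  rewrite /muhat_t pulls_t0 (le_trans (ucount_muhat_le j early)) //.
  have := lnT_le_twice_lnW; rewrite /cst; lra.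
apply: le_trans (ucount_ge i late r_le_T) _.
by rewrite ler_nat -pulls_t0 npulls_mono.
Qed.

Lemma mustar_le_NCBbar t : in_phase2 Y A W t -> ms <= NCBbar Y A W istar t.
Proof.
move=> ph2; have [_ t_le_W _] := ph2.
set n := npulls A istar t.
have n_ge : 64 * S <= n%:R := npulls_phase2_ge istar ph2.
have n_le_T : (n <= T)%N.
  by rewrite (leq_trans (npulls_le _ _ _)) // (leq_trans (leq_pred t)) // (leq_trans t_le_W).
have n_gt0 : 0 < n%:R :> R by apply: lt_le_trans n_ge; rewrite mulr_gt0 // Sval_gt0.
have mn_ge : 576 * L <= ms * n%:R.
  rewrite (le_trans _ (ler_wpM2l (ltW mustar_gt0) n_ge)) //.
  by rewrite mulrCA [ms * _]mulrC Sval_mustar; have := lnT_gt0; lra.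
have mu_large : ms / 64 < mu istar by rewrite mu_istar; have := mustar_gt0; lra.
rewrite /NCBbar /muhat_t /cst -mu_istar -/n.
by apply: (mean_le_ncb _ n_gt0 (ltW lnT_gt0) lnT_le_twice_lnW _ (E2Y mu_large n_ge n_le_T));
  rewrite mu_istar.
Qed.

End Analysis.

Theorem lemma9 (R : realType) (k : nat) (mu : 'I_k -> R)
  (Y : 'I_k -> nat -> R) (U : nat -> 'I_k) (A : nat -> 'I_k)
  (T W : nat) (istar : 'I_k) :
  (forall i, 0 <= mu i <= 1) ->
  (forall i s, 0 <= Y i s <= 1) ->
  0 < mustar mu ->
  Num.sqrt (T%:R : R) <= W%:R -> (W <= T)%N ->
  968 * k%:R * Sval mu T <= T%:R ->
  mu istar = mustar mu ->
  ncb_run Y U A W ->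
  eventE Y U mu T ->
  forall t : nat, in_phase2 Y A W t -> mustar mu <= NCBbar Y A W istar t.
Proof.
move=> mu01 Y01 ms_gt0 sqrtT_le_W W_le_T T_ge mu_istar run [E1U [E2Y E3Y]] t.
have mu_le1 i : mu i <= 1 by case/andP: (mu01 i).
have Y_ge0 i s : 0 <= Y i s by case/andP: (Y01 i s).
exact: (mustar_le_NCBbar ms_gt0 mu_le1 Y_ge0 mu_istar E1U E2Y E3Y T_ge sqrtT_le_W W_le_T run).
Qed.
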